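(* Let $L\ge1$, $\delta>0$, $\lambda^0=(\lambda^0_1,\dots,\lambda^0_L)\in(0,\infty)^L$, and let $c_1,\dots,c_L:[0,\infty)\to\mathbb{R}$ be continuous and strictly increasing. For $m\in\mathbb{N}$ put $\lambda^m_i=m\lambda^0_i$ and, for $\beta=(\beta_1,\dots,\beta_L)\in[0,\infty)^L$, $$f_m(\beta)=\sum_{i=1}^L c_i(\beta_i)+\delta\Big(1-\prod_{i=1}^L\big(1-\tilde\alpha(\beta_i,\lambda^m_i)\big)\Big),\qquad g_m(\beta)=\sum_{i=1}^L c_i(\beta_i)+\delta\Big(1-\prod_{i=1}^L\big(1-UB(\beta_i,\lambda^m_i)\big)\Big).$$ Then $\displaystyle\lim_{m\to\infty}\sup_{\beta\ge0}\big(g_m(\beta)-f_m(\beta)\big)=0.$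
   Context: $\phi,\Phi$ are the standard normal density and distribution function. For $\lambda>0$ and real $n\ge 0$, $\bar\alpha(n,\lambda)=\min\Big\{1,\big[\lambda\int_0^\infty t e^{-\lambda t}(1+t)^{n-1}\,dt\big]^{-1}\Big\}$ is the continuous Erlang-C function, and $\tilde\alpha(\beta,\lambda)=\bar\alpha(\lambda+\beta\sqrt\lambda,\lambda)$. For $\lambda>0,\beta\ge 0$ set $n=\lambda+\beta\sqrt{\lambda}$, $\rho=\lambda/n$, $a=\sqrt{-2n(1-\rho+\ln\rho)}$, $\gamma=(n-\lambda)/\sqrt{n}$, and $UB(\beta,\lambda)=\left[\rho+\gamma\left(\frac{\Phi(a)}{\phi(a)}+\frac{2}{3\sqrt{n}}\right)\right]^{-1}$ (so $UB(0,\lambda)=1$). It is known (Janssen, van Leeuwaarden and Zwart) that $\tilde\alpha(\beta,\lambda)\le UB(\beta,\lambda)$ for all $\lambda,\beta>0$. *)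

From Stdlib Require Import Reals Lra Lia ClassicalEpsilon.
Open Scope R_scope.

Definition improper_int_upper (f : R -> R) (a I : R) : Prop :=
  forall eps, 0 < eps -> exists M, forall b, M <= b ->
    exists pr : Riemann_integrable f a b, Rabs (RiemannInt pr - I) < eps.

Definition improper_int_lower (f : R -> R) (x I : R) : Prop :=
  forall eps, 0 < eps -> exists M, forall b, b <= M ->
    exists pr : Riemann_integrable f b x, Rabs (RiemannInt pr - I) < eps.

(* The value of int_a^oo f (chosen by epsilon; meaningful when it converges). *)
Definition int_a_infty (f : R -> R) (a : R) : R :=
  epsilon (inhabits 0) (fun I => improper_int_upper f a I).

Definition int_minfty_x (f : R -> R) (x : R) : R :=
  epsilon (inhabits 0) (fun I => improper_int_lower f x I).

Definition phi (t : R) : R := / sqrt (2 * PI) * exp (- (t ^ 2) / 2).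
Definition Phi (x : R) : R := int_minfty_x phi x.

Definition erlang_integrand (n lam : R) (t : R) : R :=
  t * exp (- lam * t) * Rpower (1 + t) (n - 1).

Definition alpha_bar (n lam : R) : R :=
  Rmin 1 (/ (lam * int_a_infty (erlang_integrand n lam) 0)).

Definition alpha_tilde (beta lam : R) : R :=
  alpha_bar (lam + beta * sqrt lam) lam.

Definition UB (beta lam : R) : R :=
  let n := lam + beta * sqrt lam in
  let rho := lam / n in
  let a := sqrt (- 2 * n * (1 - rho + ln rho)) in
  let gamma := (n - lam) / sqrt n in
  / (rho + gamma * (Phi a / phi a + 2 / (3 * sqrt n))).

(* finite sums / products over indices 0 .. L-1 *)
Fixpoint sum_to (L : nat) (F : nat -> R) : R :=
  match L with O => 0 | S k => sum_to k F + F k end.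
Fixpoint prod_to (L : nat) (F : nat -> R) : R :=
  match L with O => 1 | S k => prod_to k F * F k end.

Definition f_m (L : nat) (c : nat -> R -> R) (delta : R) (lam0 : nat -> R)
  (m : nat) (beta : nat -> R) : R :=
  sum_to L (fun i => c i (beta i)) +
  delta * (1 - prod_to L (fun i => 1 - alpha_tilde (beta i) (INR m * lam0 i))).

Definition g_m (L : nat) (c : nat -> R -> R) (delta : R) (lam0 : nat -> R)
  (m : nat) (beta : nat -> R) : R :=
  sum_to L (fun i => c i (beta i)) +
  delta * (1 - prod_to L (fun i => 1 - UB (beta i) (INR m * lam0 i))).

Definition gap_set (L : nat) (c : nat -> R -> R) (delta : R) (lam0 : nat -> R)
  (m : nat) : R -> Prop :=
  fun y => exists beta : nat -> R,
    (forall i, (i < L)%nat -> 0 <= beta i) /\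
    y = g_m L c delta lam0 m beta - f_m L c delta lam0 m beta.

(* The cost terms cancel, so g_m - f_m = delta * (prod_i (1 - alpha_i) - prod_i (1 - UB_i))
   with all factors in [0, 1]; hence the gap is at most delta * L * max_i (UB_i - alpha_i).
   Everything therefore rests on the uniform estimate
       sup_{beta >= 0} (UB (beta, lam) - alpha_tilde (beta, lam)) -> 0   (lam -> oo).
   For beta beyond a threshold B, UB itself is small (gamma ~ beta is large).  For
   beta <= B both quantities are compared with 1 / A, A = 1 + beta * int_0^M e^{beta u - u^2/2}:
   - substituting t = u / sqrt lam in the Erlang integral and using Taylor bounds for
     ln (1 + t) gives lam * int_0^oo ... <= e^{erlang_error} A + (M + 1) e^{-M};
   - the Mills-ratio bound Phi a / phi a >= int_0^M e^{a u - u^2/2} together with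
     a ~ beta, rho ~ 1, gamma ~ beta gives UB <= 1 / (A - ub_error);
   and erlang_error, ub_error -> 0 as lam -> oo for fixed B and M. *)

From Stdlib Require Import Reals Lra Lia Psatz Classical ClassicalEpsilon.
From Coquelicot Require Import Coquelicot.
Open Scope R_scope.

Lemma deriv_nonneg_le (f df : R -> R) :
  (forall x, 0 <= x -> is_derive f x (df x)) ->
  (forall x, 0 <= x -> 0 <= df x) -> forall t, 0 <= t -> f 0 <= f t.
Proof.
  intros Hd Hp t Ht.
  destruct (MVT_gen f 0 t df) as [c [Hc Heq]].
  - intros x Hx. apply Hd. rewrite Rmin_left in Hx by lra. lra.
  - intros x Hx. rewrite Rmin_left in Hx by lra.
    apply derivable_continuous_pt. exists (df x). apply is_derive_Reals. apply Hd. lra.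
  - rewrite Rmin_left in Hc by lra. rewrite Rmax_right in Hc by lra.
    assert (0 <= df c) by (apply Hp; lra). nra.
Qed.

Lemma ln_1p_ge0 t : 0 <= t -> 0 <= ln (1 + t).
Proof. intros. rewrite <- ln_1. apply ln_le; lra. Qed.

Lemma ln_1p_le_rational t : 0 <= t -> ln (1 + t) <= t - t ^ 2 / (2 * (1 + t)).
Proof.
  intros Ht.
  pose (f := fun x => x - x ^ 2 / (2 * (1 + x)) - ln (1 + x)).
  assert (Hf : f 0 <= f t).
  { apply (deriv_nonneg_le f (fun x => x ^ 2 / (2 * (1 + x) ^ 2))); auto.
    - intros x Hx. unfold f. auto_derive; [lra | field; lra].
    - intros x Hx. apply Rmult_le_pos; [nra | apply Rlt_le, Rinv_0_lt_compat; nra]. }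
  unfold f in Hf. rewrite Rplus_0_r, ln_1 in Hf. lra.
Qed.

Lemma ln_1p_le_cubic t : 0 <= t -> ln (1 + t) <= t - t ^ 2 / 2 + t ^ 3 / 3.
Proof.
  intros Ht.
  pose (f := fun x => x - x ^ 2 / 2 + x ^ 3 / 3 - ln (1 + x)).
  assert (Hf : f 0 <= f t).
  { apply (deriv_nonneg_le f (fun x => x ^ 3 / (1 + x))); auto.
    - intros x Hx. unfold f. auto_derive; [lra | field; lra].
    - intros x Hx. apply Rmult_le_pos; [nra | apply Rlt_le, Rinv_0_lt_compat; nra]. }
  unfold f in Hf. rewrite Rplus_0_r, ln_1 in Hf. lra.
Qed.

Lemma ln_1p_ge_quadratic t : 0 <= t -> t - t ^ 2 / 2 <= ln (1 + t).
Proof.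
  intros Ht.
  pose (f := fun x => ln (1 + x) - x + x ^ 2 / 2).
  assert (Hf : f 0 <= f t).
  { apply (deriv_nonneg_le f (fun x => x ^ 2 / (1 + x))); auto.
    - intros x Hx. unfold f. auto_derive; [lra | field; lra].
    - intros x Hx. apply Rmult_le_pos; [nra | apply Rlt_le, Rinv_0_lt_compat; nra]. }
  unfold f in Hf. rewrite Rplus_0_r, ln_1 in Hf. lra.
Qed.

Lemma ln_le_sub1 x : 0 < x -> ln x <= x - 1.
Proof.
  intros Hx. rewrite <- (ln_exp (x - 1)). apply ln_le; [exact Hx|].
  pose proof (exp_ineq1_le (x - 1)). lra.
Qed.

Lemma exp_le_mono x y : x <= y -> exp x <= exp y.
Proof. intros [H|H]; [left; apply exp_increasing; exact H | subst; lra]. Qed.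

Lemma one_sub_le_exp_neg x : 1 - x <= exp (- x).
Proof. pose proof (exp_ineq1_le (- x)). lra. Qed.

Lemma exp_sub1_le_twice e : 0 <= e -> e <= / 2 -> exp e - 1 <= 2 * e.
Proof.
  intros H1 H2. pose proof (one_sub_le_exp_neg e).
  assert (Hp : exp e * exp (- e) = 1) by (rewrite <- exp_plus, Rplus_opp_r; apply exp_0).
  pose proof (exp_pos e). nra.
Qed.

Lemma inv3_le_exp_neg_half : / 3 <= exp (- / 2).
Proof.
  rewrite exp_Ropp. apply Rinv_le_contravar; [apply exp_pos|].
  eapply Rle_trans; [|apply exp_le_3]. apply exp_le_mono. lra.
Qed.

(* The tail bound (M + 1) e^{-M} <= 4 / M, from e^M >= (1 + M/2)^2. *)
Lemma linear_exp_tail_le M : 0 < M -> (M + 1) * exp (- M) <= 4 / M.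
Proof.
  intros HM. pose proof (exp_ineq1_le (M / 2)) as H.
  assert (Hm : exp M = exp (M / 2) * exp (M / 2)) by (rewrite <- exp_plus; f_equal; field).
  assert (He : (1 + M / 2) * (1 + M / 2) <= exp M) by (rewrite Hm; apply Rmult_le_compat; lra).
  rewrite exp_Ropp. apply (Rmult_le_reg_r (exp M)); [apply exp_pos|].
  rewrite Rmult_assoc, Rinv_l by (apply Rgt_not_eq, exp_pos). rewrite Rmult_1_r.
  apply Rle_trans with (4 / M * ((1 + M / 2) * (1 + M / 2))).
  - apply (Rmult_le_reg_r M); auto. field_simplify; nra.
  - apply Rmult_le_compat_l; auto. apply Rlt_le, Rdiv_lt_0_compat; lra.
Qed.

Lemma div_le_of_div_le c t s : 0 < t -> 0 <= c -> 0 < s -> c / t <= s -> c / s <= t.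
Proof.
  intros Ht Hc Hs H. apply (Rmult_le_reg_r s); auto. unfold Rdiv.
  rewrite Rmult_assoc, Rinv_l by lra.
  apply (Rmult_le_compat_r t) in H; [|lra]. unfold Rdiv in H.
  rewrite Rmult_assoc, Rinv_l in H by lra. lra.
Qed.

Lemma monotone_bounded_limit (F : R -> R) (a K : R) :
  (forall b b', a <= b -> b <= b' -> F b <= F b') -> (forall b, a <= b -> F b <= K) ->
  exists I, forall eps, 0 < eps -> exists M, forall b, M <= b -> Rabs (F b - I) < eps.
Proof.
  intros Hm Hb.
  destruct (completeness (fun y => exists b, a <= b /\ y = F b)) as [I [HI1 HI2]].
  - exists K. intros y [b [Hab ->]]. auto.
  - exists (F a), a. split; [lra|auto].
  - exists I. intros eps He.
    destruct (classic (exists b, a <= b /\ I - eps < F b)) as [[b0 [Hb0 Hlt]]|Hn].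
    + exists b0. intros b Hbb. assert (F b0 <= F b) by (apply Hm; lra).
      assert (F b <= I) by (apply HI1; exists b; split; [lra|auto]).
      apply Rabs_def1; lra.
    + exfalso. assert (I <= I - eps); [|lra].
      apply HI2. intros y [b [Hab ->]].
      apply Rnot_lt_le. intro. apply Hn. exists b. auto.
Qed.

Ltac continuity_tac :=
  apply (ex_derive_continuous (K:=R_AbsRing) (V:=R_NormedModule)); auto_derive.

Lemma scal_R (x y : R) : scal x y = x * y.
Proof. reflexivity. Qed.

Lemma ex_RInt_cont (f : R -> R) a b : a <= b ->
  (forall x, a <= x <= b -> continuous f x) -> ex_RInt f a b.
Proof.
  intros Hab Hc. apply (ex_RInt_continuous (V:=R_CompleteNormedModule)).
  intros z Hz. rewrite Rmin_left in Hz by lra. rewrite Rmax_right in Hz by lra. auto.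
Qed.

Lemma RInt_le_cont (f g : R -> R) a b : a <= b ->
  (forall x, a <= x <= b -> continuous f x) -> (forall x, a <= x <= b -> continuous g x) ->
  (forall x, a <= x <= b -> f x <= g x) -> RInt f a b <= RInt g a b.
Proof.
  intros Hab Hf Hg H. apply RInt_le; auto; try (apply ex_RInt_cont; auto).
  intros; apply H; lra.
Qed.

Lemma RInt_ge0_cont (f : R -> R) a b : a <= b ->
  (forall x, a <= x <= b -> continuous f x) -> (forall x, a <= x <= b -> 0 <= f x) ->
  0 <= RInt f a b.
Proof.
  intros Hab Hf H. apply RInt_ge_0; auto; [apply ex_RInt_cont; auto|]. intros; apply H; lra.
Qed.

Lemma RInt_split_cont (f : R -> R) a b c : a <= b -> b <= c ->
  (forall x, a <= x <= c -> continuous f x) -> RInt f a c = RInt f a b + RInt f b c.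
Proof.
  intros H1 H2 Hc. rewrite <- (RInt_Chasles (V:=R_CompleteNormedModule) f a b c); [reflexivity| |];
    apply ex_RInt_cont; auto; intros; apply Hc; lra.
Qed.

Lemma RInt_mono_bound (f : R -> R) a b c : a <= b -> b <= c ->
  (forall x, a <= x <= c -> continuous f x) -> (forall x, b <= x <= c -> 0 <= f x) ->
  RInt f a b <= RInt f a c.
Proof.
  intros H1 H2 Hc Hp. rewrite (RInt_split_cont f a b c); auto.
  assert (0 <= RInt f b c) by (apply RInt_ge0_cont; auto; intros; apply Hc; lra). lra.
Qed.

Lemma RInt_scal_cont (f : R -> R) k a b : a <= b ->
  (forall x, a <= x <= b -> continuous f x) ->
  RInt (fun x => k * f x) a b = k * RInt f a b.
Proof.
  intros Hab Hc. rewrite <- scal_R, <- (RInt_scal (V:=R_CompleteNormedModule)); [reflexivity|].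
  apply ex_RInt_cont; auto.
Qed.

Lemma RInt_plus_cont (f g : R -> R) a b : a <= b ->
  (forall x, a <= x <= b -> continuous f x) -> (forall x, a <= x <= b -> continuous g x) ->
  RInt (fun x => f x + g x) a b = RInt f a b + RInt g a b.
Proof.
  intros Hab Hf Hg.
  exact (RInt_plus (V:=R_CompleteNormedModule) f g a b (ex_RInt_cont f a b Hab Hf)
           (ex_RInt_cont g a b Hab Hg)).
Qed.

Lemma RInt_antiderivative (F f : R -> R) a b : a <= b ->
  (forall x, a <= x <= b -> is_derive F x (f x)) -> (forall x, a <= x <= b -> continuous f x) ->
  RInt f a b = F b - F a.
Proof.
  intros Hab Hd Hc. apply is_RInt_unique, (is_RInt_derive (V:=R_CompleteNormedModule));
    intros x Hx; rewrite Rmin_left in Hx by lra; rewrite Rmax_right in Hx by lra; auto.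
Qed.

Lemma int_a_infty_sup (f : R -> R) (a K : R) :
  (forall x, a <= x -> continuous f x) -> (forall x, a <= x -> 0 <= f x) ->
  (forall b, a <= b -> RInt f a b <= K) ->
  (forall b, a <= b -> RInt f a b <= int_a_infty f a) /\ int_a_infty f a <= K.
Proof.
  intros Hc Hp HK.
  assert (Hex : forall b, a <= b -> ex_RInt f a b)
    by (intros b Hb; apply ex_RInt_cont; auto; intros; apply Hc; lra).
  assert (Hm : forall b b', a <= b -> b <= b' -> RInt f a b <= RInt f a b')
    by (intros b b' H1 H2; apply RInt_mono_bound; auto; intros; [apply Hc | apply Hp]; lra).
  destruct (monotone_bounded_limit (fun b => RInt f a b) a K Hm HK) as [I0 HI0].
  assert (Hspec : improper_int_upper f a (int_a_infty f a)).
  { unfold int_a_infty. apply epsilon_spec. exists I0. intros eps He.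
    destruct (HI0 eps He) as [M HM]. exists (Rmax M a). intros b Hb.
    assert (a <= b) by (eapply Rle_trans; [apply Rmax_r|exact Hb]).
    exists (ex_RInt_Reals_0 _ _ _ (Hex b H)). rewrite <- RInt_Reals.
    apply HM. eapply Rle_trans; [apply Rmax_l|exact Hb]. }
  set (I := int_a_infty f a) in *.
  assert (Hlim : forall eps b0, 0 < eps ->
             exists b, b0 <= b /\ a <= b /\ Rabs (RInt f a b - I) < eps).
  { intros eps b0 He. destruct (Hspec eps He) as [M HM].
    set (b := Rmax (Rmax M a) b0).
    assert (Hb : M <= b /\ a <= b /\ b0 <= b)
      by (unfold b; repeat split; repeat (apply Rmax_l || apply Rmax_r ||
            (eapply Rle_trans; [|apply Rmax_l]))).
    destruct (HM b (proj1 Hb)) as [pr Hpr].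
    exists b. rewrite (RInt_Reals f a _ pr). repeat split; tauto || exact Hpr. }
  split.
  - intros b Hb. apply Rnot_lt_le. intro Hlt.
    destruct (Hlim (RInt f a b - I) b) as [b' [Hbb' [_ H2]]]; [lra|].
    pose proof (Hm b b' Hb Hbb'). apply Rabs_def2 in H2. lra.
  - apply Rnot_lt_le. intro Hlt.
    destruct (Hlim (I - K) a) as [b [_ [Hb H2]]]; [lra|].
    pose proof (HK b Hb). apply Rabs_def2 in H2. lra.
Qed.

Lemma int_minfty_x_ge (f : R -> R) (x K : R) :
  (forall t, t <= x -> continuous f t) -> (forall t, t <= x -> 0 <= f t) ->
  (forall b, b <= x -> RInt f b x <= K) ->
  forall b, b <= x -> RInt f b x <= int_minfty_x f x.
Proof.
  intros Hc Hp HK.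
  assert (Hex : forall b, b <= x -> ex_RInt f b x)
    by (intros b Hb; apply ex_RInt_cont; auto; intros; apply Hc; lra).
  assert (Hm : forall b b', b' <= b -> b <= x -> RInt f b x <= RInt f b' x).
  { intros b b' H1 H2. rewrite (RInt_split_cont f b' b x); auto; [|intros; apply Hc; lra].
    assert (0 <= RInt f b' b) by (apply RInt_ge0_cont; auto; intros; [apply Hc|apply Hp]; lra).
    lra. }
  destruct (monotone_bounded_limit (fun b => RInt f (- b) x) (- x) K) as [I0 HI0].
  { intros b b' H1 H2. apply Hm; lra. }
  { intros b H. apply HK; lra. }
  assert (Hspec : improper_int_lower f x (int_minfty_x f x)).
  { unfold int_minfty_x. apply epsilon_spec. exists I0. intros eps He.
    destruct (HI0 eps He) as [M HM]. exists (Rmin (- M) x). intros b Hb.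
    assert (b <= x) by (eapply Rle_trans; [exact Hb|apply Rmin_r]).
    exists (ex_RInt_Reals_0 _ _ _ (Hex b H)). rewrite <- RInt_Reals.
    replace b with (- - b) by ring. apply HM.
    assert (b <= - M) by (eapply Rle_trans; [exact Hb|apply Rmin_l]). lra. }
  set (I := int_minfty_x f x) in *.
  intros b Hb. apply Rnot_lt_le. intro Hlt.
  destruct (Hspec (RInt f b x - I)) as [M HM]; [lra|].
  destruct (HM (Rmin M b) (Rmin_l _ _)) as [pr Hpr].
  rewrite <- (RInt_Reals f _ _ pr) in Hpr.
  assert (RInt f b x <= RInt f (Rmin M b) x) by (apply Hm; [apply Rmin_r|lra]).
  apply Rabs_def2 in Hpr. lra.
Qed.

(* phi (a - u) = phi a * mills_kernel a u, so Phi a / phi a = int_0^oo mills_kernel a. *)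
Definition mills_kernel (a u : R) : R := exp (a * u - u ^ 2 / 2).
Definition mills_int (a M : R) : R := RInt (mills_kernel a) 0 M.

Lemma mills_kernel_cont a u : continuous (mills_kernel a) u.
Proof. unfold mills_kernel. continuity_tac. auto. Qed.

Lemma mills_kernel_pos a u : 0 < mills_kernel a u.
Proof. apply exp_pos. Qed.

Lemma mills_int_ge0 a M : 0 <= M -> 0 <= mills_int a M.
Proof.
  intros. apply RInt_ge0_cont; auto; intros;
    [apply mills_kernel_cont | left; apply mills_kernel_pos].
Qed.

Lemma phi_cont t : continuous phi t.
Proof. unfold phi. continuity_tac. auto. Qed.

Lemma phi_pos t : 0 < phi t.
Proof.
  unfold phi. apply Rmult_lt_0_compat; [|apply exp_pos].
  apply Rinv_0_lt_compat, sqrt_lt_R0. pose proof PI_RGT_0. lra.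
Qed.

(* The substitution t = a - u. *)
Lemma RInt_phi_left a M : 0 <= M -> RInt phi (a - M) a = phi a * mills_int a M.
Proof.
  intros HM.
  assert (Hex : forall u v, ex_RInt phi u v)
    by (intros; apply (ex_RInt_continuous (V:=R_CompleteNormedModule)); intros; apply phi_cont).
  assert (Hcl := RInt_comp_lin (V:=R_CompleteNormedModule) phi (-1) a 0 M (Hex _ _)).
  rewrite RInt_scal, scal_R in Hcl
    by (apply ex_RInt_cont; auto; intros; unfold phi; continuity_tac; auto).
  replace (-1 * M + a) with (a - M) in Hcl by ring. replace (-1 * 0 + a) with a in Hcl by ring.
  assert (Hsw : RInt phi a (a - M) = - RInt phi (a - M) a)
    by (rewrite <- (opp_RInt_swap (V:=R_CompleteNormedModule)); [reflexivity | apply Hex]).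
  rewrite Hsw in Hcl.
  unfold mills_int. rewrite <- RInt_scal_cont by (auto; intros; apply mills_kernel_cont).
  transitivity (RInt (fun u => phi (-1 * u + a)) 0 M); [lra|].
  apply RInt_ext. intros x _. unfold phi, mills_kernel.
  rewrite Rmult_assoc, <- exp_plus. do 2 f_equal. field.
Qed.

(* Partial integrals of phi over [b, a] are bounded, since phi t <= phi_0 e^{t + 1/2}. *)
Lemma RInt_phi_bounded a b : b <= a -> RInt phi b a <= / sqrt (2 * PI) * exp (a + / 2).
Proof.
  intros Hb. set (C := / sqrt (2 * PI)).
  assert (HC : 0 < C) by (apply Rinv_0_lt_compat, sqrt_lt_R0; pose proof PI_RGT_0; lra).
  assert (Hle : RInt phi b a <= RInt (fun t => C * exp (t + / 2)) b a).
  { apply RInt_le_cont; auto; intros; [apply phi_cont | continuity_tac; auto |].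
    unfold phi. fold C. apply Rmult_le_compat_l; [lra|]. apply exp_le_mono.
    pose proof (pow2_ge_0 (x + 1)). simpl in *. nra. }
  rewrite (RInt_antiderivative (fun t => C * exp (t + / 2)) (fun t => C * exp (t + / 2))) in Hle;
    [| exact Hb | intros x Hx; auto_derive; auto; ring | intros; continuity_tac; auto].
  pose proof (exp_pos (b + / 2)). nra.
Qed.

Lemma mills_int_le_ratio a M : 0 <= M -> mills_int a M <= Phi a / phi a.
Proof.
  intros HM.
  assert (H : RInt phi (a - M) a <= Phi a).
  { apply (int_minfty_x_ge phi a _ (fun t _ => phi_cont t) (fun t _ => Rlt_le _ _ (phi_pos t))
             (RInt_phi_bounded a)). lra. }
  rewrite RInt_phi_left in H by exact HM.
  pose proof (phi_pos a). apply (Rmult_le_reg_l (phi a)); auto.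
  field_simplify; lra.
Qed.

Lemma mills_int_1_ge a : 0 <= a -> exp (- / 2) <= mills_int a 1.
Proof.
  intros Ha. unfold mills_int.
  assert (H : RInt (fun _ => exp (- / 2)) 0 1 <= RInt (mills_kernel a) 0 1).
  { apply RInt_le_cont; [lra | intros; apply continuous_const | intros; apply mills_kernel_cont |].
    intros x Hx. apply exp_le_mono. nra. }
  rewrite RInt_const, scal_R in H. lra.
Qed.

Lemma mills_int_le b M B : 0 <= M -> 0 <= b <= B -> mills_int b M <= M * exp (B * M).
Proof.
  intros HM Hb. unfold mills_int.
  assert (H : RInt (mills_kernel b) 0 M <= RInt (fun _ => exp (B * M)) 0 M).
  { apply RInt_le_cont; auto; [intros; apply mills_kernel_cont | intros; apply continuous_const |].
    intros x Hx. apply exp_le_mono. nra. }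
  rewrite RInt_const, scal_R in H. lra.
Qed.

Lemma mills_int_shift a b d M : 0 <= M -> 0 <= d -> b - d <= a ->
  exp (- (d * M)) * mills_int b M <= mills_int a M.
Proof.
  intros HM Hd Ha. unfold mills_int.
  rewrite <- RInt_scal_cont by (auto; intros; apply mills_kernel_cont).
  apply RInt_le_cont; auto; intros; [| apply mills_kernel_cont |].
  - apply (continuous_scal_r (K:=R_AbsRing) (V:=R_NormedModule)); apply mills_kernel_cont.
  - unfold mills_kernel. rewrite <- exp_plus. apply exp_le_mono. nra.
Qed.

Lemma int_u_mills_kernel b M : 0 <= M ->
  RInt (fun u => u * mills_kernel b u) 0 M = 1 - mills_kernel b M + b * mills_int b M.
Proof.
  intros HM.
  assert (Hk : forall x, continuous (fun u => (u - b) * mills_kernel b u) x)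
    by (intros; unfold mills_kernel; continuity_tac; auto).
  assert (H1 : RInt (fun u => (u - b) * mills_kernel b u) 0 M = 1 - mills_kernel b M).
  { rewrite (RInt_antiderivative (fun u => - mills_kernel b u)); auto.
    - unfold mills_kernel at 2. replace (b * 0 - 0 ^ 2 / 2) with 0 by field. rewrite exp_0. lra.
    - intros x Hx. unfold mills_kernel. auto_derive; auto.
      replace (b * x + - (x * (x * 1) * / 2)) with (b * x - x ^ 2 / 2) by field. field. }
  unfold mills_int. rewrite <- RInt_scal_cont by (auto; intros; apply mills_kernel_cont).
  rewrite <- H1, <- RInt_plus_cont by (auto; intros; unfold mills_kernel; continuity_tac; auto).
  apply RInt_ext. intros x _.
  change (x * mills_kernel b x = (x - b) * mills_kernel b x + b * mills_kernel b x). ring.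
Qed.

Definition servers (lam beta : R) : R := lam + beta * sqrt lam.
Definition ub_a (lam beta : R) : R :=
  sqrt (- 2 * servers lam beta * (1 - lam / servers lam beta + ln (lam / servers lam beta))).
Definition ub_gamma (lam beta : R) : R := (servers lam beta - lam) / sqrt (servers lam beta).

Lemma UB_unfold lam beta : UB beta lam =
  / (lam / servers lam beta + ub_gamma lam beta *
       (Phi (ub_a lam beta) / phi (ub_a lam beta) + 2 / (3 * sqrt (servers lam beta)))).
Proof. reflexivity. Qed.

Lemma sqrt_ge1 x : 1 <= x -> sqrt x * sqrt x = x /\ 1 <= sqrt x.
Proof.
  intros Hx. split; [apply sqrt_sqrt; lra|]. rewrite <- sqrt_1. apply sqrt_le_1; lra.
Qed.

Lemma servers_ge lam beta : 0 < lam -> 0 <= beta -> lam <= servers lam beta.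
Proof. intros. unfold servers. pose proof (sqrt_lt_R0 lam H). nra. Qed.

Lemma ub_gamma_ge0 lam beta : 0 < lam -> 0 <= beta -> 0 <= ub_gamma lam beta.
Proof.
  intros. unfold ub_gamma. pose proof (servers_ge lam beta H H0).
  apply Rmult_le_pos; [lra|]. left. apply Rinv_0_lt_compat, sqrt_lt_R0. lra.
Qed.

Lemma UB_zero lam : 0 < lam -> UB 0 lam = 1.
Proof.
  intros Hl. rewrite UB_unfold. unfold ub_gamma, servers.
  replace (lam + 0 * sqrt lam) with lam by ring.
  replace (lam / lam) with 1 by (field; lra).
  replace ((lam - lam) / sqrt lam) with 0 by (field; apply Rgt_not_eq, sqrt_lt_R0; lra).
  rewrite Rmult_0_l, Rplus_0_r. apply Rinv_1.
Qed.

Lemma UB_le_mills lam beta M : 0 < lam -> 0 <= beta -> 0 <= M ->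
  0 < UB beta lam /\
  UB beta lam <= / (lam / servers lam beta + ub_gamma lam beta * mills_int (ub_a lam beta) M).
Proof.
  intros Hl Hb HM. rewrite UB_unfold.
  pose proof (servers_ge lam beta Hl Hb) as Hn.
  assert (Hr : 0 < lam / servers lam beta) by (apply Rdiv_lt_0_compat; lra).
  pose proof (ub_gamma_ge0 lam beta Hl Hb) as Hg.
  pose proof (mills_int_ge0 (ub_a lam beta) M HM) as HG.
  pose proof (mills_int_le_ratio (ub_a lam beta) M HM) as HP.
  assert (Hs : 0 < sqrt (servers lam beta)) by (apply sqrt_lt_R0; lra).
  assert (H3 : 0 <= 2 / (3 * sqrt (servers lam beta))) by (apply Rlt_le, Rdiv_lt_0_compat; lra).
  assert (0 <= ub_gamma lam beta * mills_int (ub_a lam beta) M) by (apply Rmult_le_pos; auto).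
  assert (ub_gamma lam beta * mills_int (ub_a lam beta) M <= ub_gamma lam beta *
     (Phi (ub_a lam beta) / phi (ub_a lam beta) + 2 / (3 * sqrt (servers lam beta))))
    by (apply Rmult_le_compat_l; lra).
  split; [apply Rinv_0_lt_compat | apply Rinv_le_contravar]; lra.
Qed.

(* UB <= 1 once lam >= 1: then 1 - rho = gamma / sqrt n and Phi a / phi a >= 1/3. *)
Lemma UB_le_1 lam beta : 1 <= lam -> 0 <= beta -> UB beta lam <= 1.
Proof.
  intros Hl Hb. rewrite UB_unfold.
  pose proof (servers_ge lam beta ltac:(lra) Hb) as Hn.
  assert (Hs : 1 <= sqrt (servers lam beta)) by (apply sqrt_ge1; lra).
  pose proof (ub_gamma_ge0 lam beta ltac:(lra) Hb) as Hg.
  pose proof (mills_int_le_ratio (ub_a lam beta) 1 ltac:(lra)) as HP.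
  pose proof (mills_int_1_ge _ (sqrt_pos _) : exp (- / 2) <= mills_int (ub_a lam beta) 1).
  pose proof inv3_le_exp_neg_half.
  set (n := servers lam beta) in *. set (s := sqrt n) in *.
  assert (Hsn : s * s = n) by (apply sqrt_sqrt; lra).
  assert (Hrho : 1 - lam / n = ub_gamma lam beta / s).
  { unfold ub_gamma. fold n s. field_simplify; try lra. rewrite <- Hsn. field. lra. }
  set (g := ub_gamma lam beta) in *. set (P := Phi (ub_a lam beta) / phi (ub_a lam beta)) in *.
  assert (/ s <= 1) by (rewrite <- Rinv_1; apply Rinv_le_contravar; lra).
  assert (Hden : g / s <= g * (P + 2 / (3 * s))).
  { unfold Rdiv. replace (g * (P + 2 * / (3 * s))) with (g * (P + 2 / 3 * / s)) by (field; lra).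
    assert (0 <= g * (P - 1 / 3 * / s)) by (apply Rmult_le_pos; lra). nra. }
  rewrite <- Rinv_1. apply Rinv_le_contravar; lra.
Qed.

Lemma ub_gamma_sq lam beta : 0 < lam -> 0 <= beta ->
  ub_gamma lam beta ^ 2 * servers lam beta = beta ^ 2 * lam.
Proof.
  intros Hl Hb. unfold ub_gamma.
  pose proof (servers_ge lam beta Hl Hb) as Hn.
  assert (Hs : sqrt (servers lam beta) * sqrt (servers lam beta) = servers lam beta)
    by (apply sqrt_sqrt; lra).
  assert (Hs2 : sqrt lam * sqrt lam = lam) by (apply sqrt_sqrt; lra).
  assert (0 < sqrt (servers lam beta)) by (apply sqrt_lt_R0; lra).
  replace (servers lam beta - lam) with (beta * sqrt lam) by (unfold servers; ring).
  set (r := sqrt (servers lam beta)) in *. rewrite <- Hs.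
  replace (beta ^ 2 * lam) with (beta ^ 2 * (sqrt lam * sqrt lam)) by (rewrite Hs2; auto).
  field. lra.
Qed.

(* For beta >= 18 / eps^2 we have gamma >= 3 / eps, hence UB <= 3 / gamma <= eps. *)
Lemma UB_large_beta lam beta eps : 1 <= lam -> 0 < eps -> 18 / eps ^ 2 <= beta -> 1 <= beta ->
  UB beta lam <= eps.
Proof.
  intros Hl He HB H1.
  destruct (UB_le_mills lam beta 1 ltac:(lra) ltac:(lra) ltac:(lra)) as [_ HU].
  pose proof (servers_ge lam beta ltac:(lra) ltac:(lra)) as Hn.
  pose proof (ub_gamma_ge0 lam beta ltac:(lra) ltac:(lra)) as Hg.
  pose proof (mills_int_1_ge _ (sqrt_pos _) : exp (- / 2) <= mills_int (ub_a lam beta) 1).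
  pose proof inv3_le_exp_neg_half.
  assert (Hr : 0 < lam / servers lam beta) by (apply Rdiv_lt_0_compat; lra).
  pose proof (ub_gamma_sq lam beta ltac:(lra) ltac:(lra)) as Hsq.
  destruct (sqrt_ge1 lam Hl) as [Hs2 Hs1].
  assert (Hnn : servers lam beta = sqrt lam * sqrt lam + beta * sqrt lam)
    by (unfold servers; lra).
  set (s := sqrt lam) in *. set (g := ub_gamma lam beta) in *.
  assert (Hg2 : beta / 2 <= g ^ 2).
  { apply Rmult_le_reg_r with (servers lam beta); [lra|].
    rewrite Hsq, Hnn, <- Hs2.
    assert (0 <= s * ((beta - 1) * s + beta * (s - 1))) by (apply Rmult_le_pos; nra). nra. }
  assert (Hg3 : 3 / eps <= g).
  { assert (9 / eps ^ 2 <= g ^ 2) by (unfold Rdiv in *; nra).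
    apply Rsqr_incr_0_var; [|auto]. unfold Rsqr.
    replace ((3 / eps) * (3 / eps)) with (9 / eps ^ 2) by (field; lra). nra. }
  assert (Hgp : 0 < g) by (pose proof (Rdiv_lt_0_compat 3 eps ltac:(lra) He); lra).
  eapply Rle_trans; [exact HU|].
  assert (Hden : g / 3 <= lam / servers lam beta + g * mills_int (ub_a lam beta) 1) by nra.
  eapply Rle_trans; [apply Rinv_le_contravar; [|exact Hden]; lra|].
  replace eps with (/ (/ eps)) by (field; lra).
  apply Rinv_le_contravar; [apply Rinv_0_lt_compat; lra|]. unfold Rdiv in *. lra.
Qed.

(* For beta <= sqrt lam, a >= beta - sqrt (beta^3 / sqrt lam): with x = beta / sqrt lam,
   a^2 = 2 n ln (1 + x) - 2 beta sqrt lam >= beta^2 - beta^3 / sqrt lam. *)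
Lemma ub_a_ge lam beta : 1 <= lam -> 0 <= beta -> beta <= sqrt lam ->
  beta - sqrt (beta ^ 3 / sqrt lam) <= ub_a lam beta.
Proof.
  intros Hl Hb Hbs.
  destruct (sqrt_ge1 lam Hl) as [Hs2 Hs1].
  assert (Hnn : servers lam beta = sqrt lam * sqrt lam + beta * sqrt lam)
    by (unfold servers; lra).
  set (s := sqrt lam) in *. set (x := beta / s).
  assert (Hx : 0 <= x) by (apply Rmult_le_pos; auto; left; apply Rinv_0_lt_compat; lra).
  assert (Hln : ln (lam / servers lam beta) = - ln (1 + x)).
  { rewrite <- ln_Rinv by lra. f_equal. rewrite Hnn, <- Hs2. unfold x. field. split; nra. }
  assert (Harg : beta ^ 2 - beta ^ 3 / s <=
     - 2 * servers lam beta * (1 - lam / servers lam beta + ln (lam / servers lam beta))).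
  { rewrite Hln. pose proof (ln_1p_ge_quadratic x Hx).
    replace (- 2 * servers lam beta * (1 - lam / servers lam beta + - ln (1 + x))) with
      (- 2 * beta * s + 2 * servers lam beta * ln (1 + x))
      by (rewrite Hnn, <- Hs2; field; nra).
    assert (2 * servers lam beta * (x - x ^ 2 / 2) <= 2 * servers lam beta * ln (1 + x))
      by (apply Rmult_le_compat_l; auto; rewrite Hnn; nra).
    assert (2 * servers lam beta * (x - x ^ 2 / 2) = 2 * beta * s + beta ^ 2 - beta ^ 3 / s)
      by (rewrite Hnn; unfold x; field; lra).
    lra. }
  assert (H3 : 0 <= beta ^ 3 / s)
    by (apply Rmult_le_pos; [nra | left; apply Rinv_0_lt_compat; lra]).
  assert (Hw0 : 0 <= beta ^ 2 - beta ^ 3 / s).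
  { replace (beta ^ 2 - beta ^ 3 / s) with (beta ^ 2 * (s - beta) / s) by (field; lra).
    apply Rmult_le_pos; [apply Rmult_le_pos; nra | left; apply Rinv_0_lt_compat; lra]. }
  set (w := sqrt (beta ^ 2 - beta ^ 3 / s)).
  assert (Hw : w <= ub_a lam beta) by (apply sqrt_le_1; auto; lra).
  assert (Hww : w * w = beta ^ 2 - beta ^ 3 / s) by (apply sqrt_sqrt; auto).
  pose proof (sqrt_pos (beta ^ 2 - beta ^ 3 / s)) as Hwp. fold w in Hwp.
  assert (Hwb : w <= beta) by nra.
  assert (Hd : beta - w <= sqrt (beta ^ 3 / s))
    by (rewrite <- (sqrt_pow2 (beta - w)) by lra; apply sqrt_le_1; nra).
  lra.
Qed.

Lemma rho_ge lam beta B : 1 <= lam -> 0 <= beta <= B ->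
  1 - B / sqrt lam <= lam / servers lam beta.
Proof.
  intros Hl Hb. destruct (sqrt_ge1 lam Hl) as [Hs2 Hs1].
  unfold servers. set (s := sqrt lam) in *. rewrite <- Hs2.
  replace (s * s / (s * s + beta * s)) with (1 - beta / (s + beta)) by (field; split; nra).
  enough (beta / (s + beta) <= B / s) by lra.
  unfold Rdiv. apply Rmult_le_compat; try lra.
  - left; apply Rinv_0_lt_compat; lra.
  - apply Rinv_le_contravar; lra.
Qed.

Lemma ub_gamma_ge lam beta B : 1 <= lam -> 0 <= beta <= B ->
  beta - B ^ 2 / sqrt lam <= ub_gamma lam beta.
Proof.
  intros Hl Hb. destruct (sqrt_ge1 lam Hl) as [Hs2 Hs1].
  unfold ub_gamma, servers. set (s := sqrt lam) in *.
  replace (lam + beta * s - lam) with (beta * s) by ring. rewrite <- Hs2.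
  assert (Hq : sqrt (s * s + beta * s) <= s + beta)
    by (rewrite <- (sqrt_pow2 (s + beta)) by lra; apply sqrt_le_1; nra).
  assert (Hq0 : 0 < sqrt (s * s + beta * s)) by (apply sqrt_lt_R0; nra).
  assert (beta * s / (s + beta) <= beta * s / sqrt (s * s + beta * s))
    by (unfold Rdiv; apply Rmult_le_compat_l; [nra | apply Rinv_le_contravar; lra]).
  enough (beta - B ^ 2 / s <= beta * s / (s + beta)) by lra.
  replace (beta * s / (s + beta)) with (beta - beta ^ 2 / (s + beta)) by (field; lra).
  enough (beta ^ 2 / (s + beta) <= B ^ 2 / s) by lra.
  unfold Rdiv. apply Rmult_le_compat.
  - nra.
  - left; apply Rinv_0_lt_compat; lra.
  - apply pow_incr; lra.
  - apply Rinv_le_contravar; lra.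
Qed.

(* The error committed in the denominator of UB for beta <= B; it vanishes as s -> oo. *)
Definition ub_error (s B M : R) : R :=
  B / s + (B * sqrt (B ^ 3 / s) * M + B ^ 2 / s) * (M * exp (B * M)).

Lemma UB_denominator_ge lam beta M B : 1 <= lam -> 0 <= beta <= B -> B <= sqrt lam -> 0 <= M ->
  1 + beta * mills_int beta M - ub_error (sqrt lam) B M <=
  lam / servers lam beta + ub_gamma lam beta * mills_int (ub_a lam beta) M.
Proof.
  intros Hl Hb HBs HM.
  pose proof (ub_a_ge lam beta Hl (proj1 Hb) ltac:(lra)) as Ha.
  pose proof (rho_ge lam beta B Hl Hb) as Hrho.
  pose proof (ub_gamma_ge lam beta B Hl Hb) as Hgam.
  pose proof (ub_gamma_ge0 lam beta ltac:(lra) (proj1 Hb)) as Hg0.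
  destruct (sqrt_ge1 lam Hl) as [Hs2 Hs1]. set (s := sqrt lam) in *.
  set (d := sqrt (B ^ 3 / s)). pose proof (sqrt_pos (B ^ 3 / s)) as Hd0. fold d in Hd0.
  assert (Hd : sqrt (beta ^ 3 / s) <= d).
  { apply sqrt_le_1_alt. unfold Rdiv. apply Rmult_le_compat_r.
    - left; apply Rinv_0_lt_compat; lra.
    - apply pow_incr; lra. }
  pose proof (mills_int_shift (ub_a lam beta) beta d M HM Hd0 ltac:(lra)) as HG1.
  pose proof (mills_int_le beta M B HM Hb) as HGm.
  pose proof (mills_int_ge0 beta M HM) as HG0.
  pose proof (one_sub_le_exp_neg (d * M)) as Hexp.
  assert (Hexp1 : exp (- (d * M)) <= 1) by (rewrite <- exp_0; apply exp_le_mono; nra).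
  pose proof (exp_pos (- (d * M))) as Hexp0.
  set (X := exp (- (d * M)) * mills_int beta M) in *.
  assert (HX0 : 0 <= X) by (unfold X; nra).
  assert (HgX : ub_gamma lam beta * X <= ub_gamma lam beta * mills_int (ub_a lam beta) M)
    by (apply Rmult_le_compat_l; auto).
  assert (H1 : (beta - B ^ 2 / s) * X <= ub_gamma lam beta * X)
    by (apply Rmult_le_compat_r; auto).
  assert (HB2 : 0 <= B ^ 2 / s)
    by (apply Rmult_le_pos; [nra | left; apply Rinv_0_lt_compat; lra]).
  assert (H2 : B ^ 2 / s * X <= B ^ 2 / s * (M * exp (B * M)))
    by (apply Rmult_le_compat_l; unfold X in *; nra).
  assert (H3 : beta * mills_int beta M - beta * X <= B * d * M * (M * exp (B * M))).
  { unfold X. replace (beta * mills_int beta M - beta * (exp (- (d * M)) * mills_int beta M))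
      with (beta * (1 - exp (- (d * M))) * mills_int beta M) by ring.
    assert (beta * (1 - exp (- (d * M))) <= B * (d * M)) by (apply Rmult_le_compat; lra).
    replace (B * d * M * (M * exp (B * M))) with (B * (d * M) * (M * exp (B * M))) by ring.
    apply Rmult_le_compat; try lra. apply Rmult_le_pos; lra. }
  unfold ub_error. fold d. lra.
Qed.

Lemma erlang_integrand_cont n lam t : -1 < t -> continuous (erlang_integrand n lam) t.
Proof. intros. unfold erlang_integrand, Rpower. continuity_tac. lra. Qed.

Lemma erlang_integrand_nonneg n lam t : 0 <= t -> 0 <= erlang_integrand n lam t.
Proof.
  intros. unfold erlang_integrand, Rpower.
  apply Rmult_le_pos; [apply Rmult_le_pos; auto|]; left; apply exp_pos.
Qed.

Definition erlang_int (lam beta : R) : R :=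
  int_a_infty (erlang_integrand (servers lam beta) lam) 0.

Lemma alpha_tilde_unfold lam beta :
  alpha_tilde beta lam = Rmin 1 (/ (lam * erlang_int lam beta)).
Proof. reflexivity. Qed.

(* A crude bound ln (1 + t) <= ln k + (1 + t)/k - 1 with k = (2 (n - 1) + 1) / lam turns the
   integrand into C * t e^{- lam t / 2}, which has a finite integral. *)
Lemma erlang_integrand_le_exp n lam t : 0 < lam -> 1 <= n -> 0 <= t ->
  erlang_integrand n lam t <=
  exp ((n - 1) * ln ((2 * (n - 1) + 1) / lam) + lam / 2) * (t * exp (- (lam / 2) * t)).
Proof.
  intros Hl Hn Ht. unfold erlang_integrand, Rpower.
  set (a := n - 1). set (k := (2 * a + 1) / lam).
  assert (Ha : 0 <= a) by (unfold a; lra).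
  assert (Hk : 0 < k) by (unfold k; apply Rdiv_lt_0_compat; lra).
  assert (Hln : ln (1 + t) <= ln k + (1 + t) / k - 1).
  { replace (ln (1 + t)) with (ln k + ln ((1 + t) / k))
      by (rewrite <- ln_mult; [f_equal; field | | apply Rdiv_lt_0_compat]; lra).
    pose proof (ln_le_sub1 ((1 + t) / k) ltac:(apply Rdiv_lt_0_compat; lra)). lra. }
  assert (H1 : a * ln (1 + t) <= a * ln k + lam / 2 + lam / 2 * t).
  { assert (a * ln (1 + t) <= a * (ln k + (1 + t) / k - 1)) by (apply Rmult_le_compat_l; auto).
    assert (a * ((1 + t) / k) <= lam / 2 * (1 + t)).
    { unfold k. replace (a * ((1 + t) / ((2 * a + 1) / lam)))
        with (lam * (1 + t) * (a / (2 * a + 1))) by (field; lra).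
      replace (lam / 2 * (1 + t)) with (lam * (1 + t) * / 2) by field.
      apply Rmult_le_compat_l; [nra|].
      apply (Rmult_le_reg_r (2 * a + 1)); [lra|]. field_simplify; lra. }
    nra. }
  replace (t * exp (- lam * t) * exp (a * ln (1 + t)))
    with (t * exp (- lam * t + a * ln (1 + t))) by (rewrite exp_plus; ring).
  replace (exp (a * ln k + lam / 2) * (t * exp (- (lam / 2) * t)))
    with (t * exp (a * ln k + lam / 2 + - (lam / 2) * t)) by (rewrite exp_plus; ring).
  apply Rmult_le_compat_l; auto. apply exp_le_mono. lra.
Qed.

Lemma int_t_exp_le lam b : 0 < lam -> 0 <= b ->
  RInt (fun t => t * exp (- (lam / 2) * t)) 0 b <= 4 / lam ^ 2.
Proof.
  intros Hl Hb.
  rewrite (RInt_antiderivative (fun t => - (2 * t / lam + 4 / lam ^ 2) * exp (- (lam / 2) * t)));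
    [| exact Hb | intros; auto_derive; auto; field; lra | intros; continuity_tac; auto].
  replace (- (lam / 2) * 0) with 0 by ring. rewrite exp_0.
  assert (0 <= 2 * b / lam) by (apply Rdiv_le_0_compat; lra).
  assert (0 < 4 / lam ^ 2) by (apply Rdiv_lt_0_compat; nra).
  assert (0 <= (2 * b / lam + 4 / lam ^ 2) * exp (- (lam / 2) * b))
    by (apply Rmult_le_pos; [lra | left; apply exp_pos]).
  replace (- (2 * 0 / lam + 4 / lam ^ 2) * 1) with (- (4 / lam ^ 2)) by (field; lra). lra.
Qed.

Lemma erlang_int_sup lam beta : 1 <= lam -> 0 <= beta ->
  (forall b, 0 <= b -> RInt (erlang_integrand (servers lam beta) lam) 0 b <= erlang_int lam beta) /\
  (forall K, (forall b, 0 <= b -> RInt (erlang_integrand (servers lam beta) lam) 0 b <= K) ->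
             erlang_int lam beta <= K).
Proof.
  intros Hl Hb.
  pose proof (servers_ge lam beta ltac:(lra) Hb) as Hn.
  set (n := servers lam beta) in *.
  set (C := exp ((n - 1) * ln ((2 * (n - 1) + 1) / lam) + lam / 2)).
  assert (HC : 0 < C) by apply exp_pos.
  assert (Hc : forall x, 0 <= x -> continuous (erlang_integrand n lam) x)
    by (intros; apply erlang_integrand_cont; lra).
  assert (Hp : forall x, 0 <= x -> 0 <= erlang_integrand n lam x)
    by (intros; apply erlang_integrand_nonneg; lra).
  assert (HK : forall b, 0 <= b -> RInt (erlang_integrand n lam) 0 b <= C * (4 / lam ^ 2)).
  { intros b Hb0.
    apply Rle_trans with (RInt (fun t => C * (t * exp (- (lam / 2) * t))) 0 b).
    - apply RInt_le_cont; auto; intros; [apply Hc; lra | continuity_tac; auto |].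
      apply erlang_integrand_le_exp; lra.
    - rewrite RInt_scal_cont by (auto; intros; continuity_tac; auto).
      apply Rmult_le_compat_l; [lra | apply int_t_exp_le; lra]. }
  split.
  - apply (int_a_infty_sup _ 0 _ Hc Hp HK).
  - intros K HK'. apply (int_a_infty_sup _ 0 _ Hc Hp HK').
Qed.

(* lam * erlang_int >= lam * int_0^1 e^{-lam} t dt > 0. *)
Lemma erlang_int_pos lam beta : 1 <= lam -> 0 <= beta -> 0 < lam * erlang_int lam beta.
Proof.
  intros Hl Hb. destruct (erlang_int_sup lam beta Hl Hb) as [Hsup _].
  pose proof (servers_ge lam beta ltac:(lra) Hb) as Hn.
  pose proof (exp_pos (- lam)) as He.
  assert (Hlow : RInt (fun t => exp (- lam) * t) 0 1
                 <= RInt (erlang_integrand (servers lam beta) lam) 0 1).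
  { apply RInt_le_cont;
      [lra | intros; continuity_tac; auto | intros; apply erlang_integrand_cont; lra |].
    intros x Hx. unfold erlang_integrand, Rpower.
    assert (exp (- lam) <= exp (- lam * x)) by (apply exp_le_mono; nra).
    assert (1 <= exp ((servers lam beta - 1) * ln (1 + x))).
    { apply Rle_trans with (exp 0); [rewrite exp_0; lra|].
      apply exp_le_mono, Rmult_le_pos; [lra | apply ln_1p_ge0; lra]. }
    set (P := exp ((servers lam beta - 1) * ln (1 + x))) in *.
    assert (exp (- lam) * x <= x * exp (- lam * x)) by nra.
    assert (0 <= x * exp (- lam * x)) by (apply Rmult_le_pos; [lra | left; apply exp_pos]).
    nra. }
  rewrite (RInt_antiderivative (fun t => exp (- lam) * t ^ 2 / 2)) in Hlow;
    [| lra | intros; auto_derive; auto; field | intros; continuity_tac; auto].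
  pose proof (Hsup 1 ltac:(lra)). apply Rmult_lt_0_compat; nra.
Qed.

Lemma alpha_tilde_range lam beta : 1 <= lam -> 0 <= beta -> 0 < alpha_tilde beta lam <= 1.
Proof.
  intros Hl Hb. rewrite alpha_tilde_unfold. pose proof (erlang_int_pos lam beta Hl Hb).
  split; [apply Rmin_glb_lt; [lra | apply Rinv_0_lt_compat; auto] | apply Rmin_l].
Qed.

Lemma alpha_tilde_ge_inv lam beta P : 1 <= lam -> 0 <= beta ->
  lam * erlang_int lam beta <= P -> 1 <= P -> / P <= alpha_tilde beta lam.
Proof.
  intros Hl Hb HP H1. rewrite alpha_tilde_unfold. pose proof (erlang_int_pos lam beta Hl Hb).
  apply Rmin_glb; [rewrite <- Rinv_1|]; apply Rinv_le_contravar; lra.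
Qed.

(* After the substitution t = u / sqrt lam, the integrand becomes erlang_scaled. *)
Definition erlang_scaled (n lam s u : R) : R := s * erlang_integrand n lam (u / s).

Lemma one_add_div_pos s u : 1 <= s -> 0 <= u -> 0 < 1 + u * / s.
Proof.
  intros. assert (0 <= u * / s) by (apply Rmult_le_pos; auto; left; apply Rinv_0_lt_compat; lra).
  lra.
Qed.

Lemma erlang_scaled_cont n lam s u : 1 <= s -> 0 <= u -> continuous (erlang_scaled n lam s) u.
Proof.
  intros. unfold erlang_scaled, erlang_integrand, Rpower. continuity_tac.
  apply one_add_div_pos; auto.
Qed.

Lemma erlang_scaled_nonneg n lam s u : 1 <= s -> 0 <= u -> 0 <= erlang_scaled n lam s u.
Proof.
  intros. unfold erlang_scaled. apply Rmult_le_pos; [lra|]. apply erlang_integrand_nonneg.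
  apply Rmult_le_pos; auto; left; apply Rinv_0_lt_compat; lra.
Qed.

Lemma erlang_int_rescale n lam b : 1 <= lam -> 0 <= b ->
  lam * RInt (erlang_integrand n lam) 0 b =
  RInt (erlang_scaled n lam (sqrt lam)) 0 (sqrt lam * b).
Proof.
  intros Hl Hb. destruct (sqrt_ge1 lam Hl) as [Hs2 Hs1]. set (s := sqrt lam) in *.
  assert (Hc : forall x, 0 <= x <= s * b ->
            continuous (fun y => erlang_integrand n lam (y / s)) x).
  { intros x Hx. unfold erlang_integrand, Rpower. continuity_tac. apply one_add_div_pos; lra. }
  assert (Hcl := RInt_comp_lin (V:=R_CompleteNormedModule)
                  (erlang_integrand n lam) (/ s) 0 0 (s * b)).
  replace (/ s * 0 + 0) with 0 in Hcl by ring.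
  replace (/ s * (s * b) + 0) with b in Hcl by (field; lra).
  specialize (Hcl ltac:(apply ex_RInt_cont; auto; intros; apply erlang_integrand_cont; lra)).
  assert (H1 : RInt (fun y => scal (/ s) (erlang_integrand n lam (/ s * y + 0))) 0 (s * b)
               = / s * RInt (fun y => erlang_integrand n lam (y / s)) 0 (s * b)).
  { rewrite <- RInt_scal_cont by (auto; nra). apply RInt_ext. intros x _.
    rewrite scal_R. do 2 f_equal. field. lra. }
  unfold erlang_scaled. rewrite RInt_scal_cont by (auto; nra).
  replace (RInt (erlang_integrand n lam) 0 b)
    with (/ s * RInt (fun y => erlang_integrand n lam (y / s)) 0 (s * b))
    by (rewrite <- H1; exact Hcl).
  rewrite <- Hs2. field. lra.
Qed.

Lemma erlang_scaled_le_exp n lam s u : 1 <= s -> lam = s * s -> 0 <= u ->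
  erlang_scaled n lam s u <= u * exp (- s * u + n * ln (1 + u / s)).
Proof.
  intros Hs Hl Hu. unfold erlang_scaled, erlang_integrand, Rpower.
  assert (Hln : 0 <= ln (1 + u / s))
    by (apply ln_1p_ge0, Rmult_le_pos; auto; left; apply Rinv_0_lt_compat; lra).
  replace (s * (u / s * exp (- lam * (u / s)) * exp ((n - 1) * ln (1 + u / s))))
    with (u * exp (- s * u + (n - 1) * ln (1 + u / s))).
  - apply Rmult_le_compat_l; auto. apply exp_le_mono. nra.
  - rewrite exp_plus. subst lam. replace (- (s * s) * (u / s)) with (- s * u) by (field; lra).
    field. lra.
Qed.

Definition erlang_error (s B M : R) : R := (1 + B) * M ^ 3 / (3 * s).

(* On [0, M], ln (1 + t) <= t - t^2/2 + t^3/3 compares the scaled integrand with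
   u e^{beta u - u^2/2}, up to the factor e^{erlang_error}. *)
Lemma erlang_scaled_le_core n lam s u beta B M : 1 <= s -> lam = s * s -> n = s * s + beta * s ->
  0 <= beta <= B -> 0 <= u <= M ->
  erlang_scaled n lam s u <= exp (erlang_error s B M) * (u * mills_kernel beta u).
Proof.
  intros Hs Hl Hn Hb Hu.
  eapply Rle_trans; [apply erlang_scaled_le_exp; auto; lra|].
  assert (Hsi : 0 < / s) by (apply Rinv_0_lt_compat; lra).
  assert (Ht : 0 <= u / s) by (apply Rmult_le_pos; lra).
  pose proof (ln_1p_le_cubic (u / s) Ht) as Hln.
  unfold mills_kernel, erlang_error.
  rewrite <- Rmult_assoc, (Rmult_comm (exp _) u), Rmult_assoc, <- exp_plus.
  apply Rmult_le_compat_l; [lra|]. apply exp_le_mono.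
  assert (n * ln (1 + u / s) <= n * (u / s - (u / s) ^ 2 / 2 + (u / s) ^ 3 / 3))
    by (apply Rmult_le_compat_l; nra).
  assert (Heq : n * (u / s - (u / s) ^ 2 / 2 + (u / s) ^ 3 / 3) =
     s * u + beta * u - u ^ 2 / 2 - beta * u ^ 2 / (2 * s)
     + (1 + beta / s) * u ^ 3 / (3 * s)) by (rewrite Hn; field; lra).
  assert (0 <= beta * u ^ 2 / (2 * s))
    by (apply Rmult_le_pos; [apply Rmult_le_pos; nra | left; apply Rinv_0_lt_compat; lra]).
  assert (Hbs : beta / s <= B).
  { apply Rle_trans with (beta * 1); [apply Rmult_le_compat_l; [lra|] | lra].
    rewrite <- Rinv_1. apply Rinv_le_contravar; lra. }
  assert ((1 + beta / s) * u ^ 3 / (3 * s) <= (1 + B) * M ^ 3 / (3 * s)).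
  { unfold Rdiv. apply Rmult_le_compat_r; [left; apply Rinv_0_lt_compat; lra|].
    apply Rmult_le_compat; [pose proof (Rmult_le_pos beta (/ s)); nra | apply pow_le; lra
      | unfold Rdiv in Hbs; lra | apply pow_incr; lra]. }
  lra.
Qed.

(* Beyond M >= 4 (B + 1), ln (1 + t) <= t - t^2 / (2 (1 + t)) gives decay like u e^{-u}. *)
Lemma erlang_scaled_le_tail n lam s u beta B M : 1 <= s -> lam = s * s -> n = s * s + beta * s ->
  0 <= beta <= B -> 4 * (B + 1) <= s -> 4 * (B + 1) <= M -> M <= u ->
  erlang_scaled n lam s u <= u * exp (- u).
Proof.
  intros Hs Hl Hn Hb HsB HMB HuM.
  eapply Rle_trans; [apply erlang_scaled_le_exp; auto; lra|].
  assert (Ht : 0 <= u / s) by (apply Rmult_le_pos; [lra | left; apply Rinv_0_lt_compat; lra]).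
  pose proof (ln_1p_le_rational (u / s) Ht) as Hln.
  apply Rmult_le_compat_l; [lra|]. apply exp_le_mono.
  assert (n * ln (1 + u / s) <= n * (u / s - (u / s) ^ 2 / (2 * (1 + u / s))))
    by (apply Rmult_le_compat_l; nra).
  assert (Heq : n * (u / s - (u / s) ^ 2 / (2 * (1 + u / s))) =
     s * u + beta * u - (s + beta) * u ^ 2 / (2 * (s + u))) by (rewrite Hn; field; lra).
  assert ((beta + 1) * u <= (s + beta) * u ^ 2 / (2 * (s + u))).
  { apply (Rmult_le_reg_r (2 * (s + u))); [lra|].
    replace ((s + beta) * u ^ 2 / (2 * (s + u)) * (2 * (s + u))) with ((s + beta) * u ^ 2)
      by (field; lra).
    assert (Hsu : s * u >= 2 * (B + 1) * (s + u)) by nra.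
    assert (u * (s * u) >= u * (2 * (B + 1) * (s + u))) by (apply Rmult_ge_compat_l; lra).
    assert ((B - beta) * (2 * (s + u) * u) >= 0) by (apply Rle_ge, Rmult_le_pos; nra).
    assert (beta * u ^ 2 >= 0) by (apply Rle_ge, Rmult_le_pos; nra).
    nra. }
  lra.
Qed.

Lemma int_u_exp_neg_tail M c : 0 <= M -> M <= c ->
  RInt (fun u => u * exp (- u)) M c <= (M + 1) * exp (- M).
Proof.
  intros HM Hc.
  rewrite (RInt_antiderivative (fun u => - ((u + 1) * exp (- u))));
    [| exact Hc | intros; auto_derive; auto; ring | intros; continuity_tac; auto].
  assert (0 < (c + 1) * exp (- c)) by (apply Rmult_lt_0_compat; [lra | apply exp_pos]). lra.
Qed.

(* Splitting the scaled integral at M: the core is at most e^{erlang_error} (1 + beta G)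
   by int_u_mills_kernel, the tail at most (M + 1) e^{-M}. *)
Lemma erlang_scaled_int_le n lam s beta B M c : 1 <= s -> lam = s * s -> n = s * s + beta * s ->
  0 <= beta <= B -> 4 * (B + 1) <= s -> 4 * (B + 1) <= M -> 0 <= c ->
  RInt (erlang_scaled n lam s) 0 c <=
  exp (erlang_error s B M) * (1 + beta * mills_int beta M) + (M + 1) * exp (- M).
Proof.
  intros Hs Hl Hn Hb HsB HMB Hc.
  set (c' := Rmax c M). pose proof (Rmax_l c M). pose proof (Rmax_r c M). fold c' in H, H0.
  assert (Hk : forall x, 0 <= x -> continuous (erlang_scaled n lam s) x)
    by (intros; apply erlang_scaled_cont; auto).
  assert (Hmono : RInt (erlang_scaled n lam s) 0 c <= RInt (erlang_scaled n lam s) 0 c')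
    by (apply RInt_mono_bound; auto; intros; [apply Hk | apply erlang_scaled_nonneg]; lra).
  rewrite (RInt_split_cont _ 0 M c') in Hmono by (lra || (intros; apply Hk; lra)).
  assert (Hcore : RInt (erlang_scaled n lam s) 0 M <=
           RInt (fun u => exp (erlang_error s B M) * (u * mills_kernel beta u)) 0 M).
  { apply RInt_le_cont;
      [lra | intros; apply Hk; lra | intros; unfold mills_kernel; continuity_tac; auto |].
    intros x Hx. apply (erlang_scaled_le_core n lam s x beta B M); auto. }
  rewrite RInt_scal_cont, int_u_mills_kernel in Hcore
    by (lra || (intros; unfold mills_kernel; continuity_tac; auto)).
  assert (Htail : RInt (erlang_scaled n lam s) M c' <= RInt (fun u => u * exp (- u)) M c').
  { apply RInt_le_cont; [lra | intros; apply Hk; lra | intros; continuity_tac; auto |].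
    intros x Hx. apply (erlang_scaled_le_tail n lam s x beta B M); auto; lra. }
  pose proof (int_u_exp_neg_tail M c' ltac:(lra) H0).
  pose proof (mills_kernel_pos beta M). pose proof (exp_pos (erlang_error s B M)).
  nra.
Qed.

Lemma lam_erlang_int_le lam beta B M : 1 <= lam -> 0 <= beta <= B -> 4 * (B + 1) <= sqrt lam ->
  4 * (B + 1) <= M ->
  lam * erlang_int lam beta <=
  exp (erlang_error (sqrt lam) B M) * (1 + beta * mills_int beta M) + (M + 1) * exp (- M).
Proof.
  intros Hl Hb Hs HM.
  set (P := exp (erlang_error (sqrt lam) B M) * (1 + beta * mills_int beta M)
            + (M + 1) * exp (- M)).
  destruct (erlang_int_sup lam beta Hl (proj1 Hb)) as [_ Hinf].
  destruct (sqrt_ge1 lam Hl) as [Hs2 Hs1].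
  enough (erlang_int lam beta <= P / lam).
  { apply (Rmult_le_compat_l lam) in H; [|lra].
    replace (lam * (P / lam)) with P in H by (field; lra). exact H. }
  apply Hinf. intros b Hb0. apply (Rmult_le_reg_l lam); [lra|].
  replace (lam * (P / lam)) with P by (field; lra).
  rewrite erlang_int_rescale by auto.
  apply (erlang_scaled_int_le _ _ _ beta B M); auto; try lra.
  - unfold servers. lra.
  - apply Rmult_le_pos; lra.
Qed.

Lemma inv_sub_inv_le Y P e : / 2 <= Y -> 1 <= P -> 0 <= e -> P - Y <= e -> / Y - / P <= 2 * e.
Proof.
  intros HY HP He HPY.
  replace (/ Y - / P) with ((P - Y) * / (Y * P)) by (field; lra).
  assert (HYP : / 2 <= Y * P) by nra.
  assert (/ (Y * P) <= 2) by (replace 2 with (/ / 2) by field; apply Rinv_le_contravar; lra).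
  pose proof (Rinv_0_lt_compat (Y * P) ltac:(lra)).
  destruct (Rle_lt_dec (P - Y) 0); nra.
Qed.

Lemma erlang_error_nonneg s B M : 0 < s -> 0 <= B -> 0 <= M -> 0 <= erlang_error s B M.
Proof.
  intros. unfold erlang_error. apply Rmult_le_pos; [apply Rmult_le_pos; [lra | apply pow_le; lra]|].
  left. apply Rinv_0_lt_compat. lra.
Qed.

Lemma ub_error_nonneg s B M : 0 < s -> 0 <= B -> 0 <= M -> 0 <= ub_error s B M.
Proof.
  intros. unfold ub_error. pose proof (Rinv_0_lt_compat s H). pose proof (sqrt_pos (B ^ 3 / s)).
  pose proof (exp_pos (B * M)). pose proof (pow_le B 2 H0).
  apply Rplus_le_le_0_compat; [apply Rmult_le_pos; lra|].
  apply Rmult_le_pos; [apply Rplus_le_le_0_compat; apply Rmult_le_pos | apply Rmult_le_pos]; nra.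
Qed.

(* Quantitative comparison for beta <= B: both UB and alpha_tilde are within the three
   error terms of 1 / (1 + beta * mills_int beta M). *)
Lemma UB_sub_alpha_tilde_le lam beta B M : 1 <= lam -> 0 <= beta <= B ->
  4 * (B + 1) <= sqrt lam -> 4 * (B + 1) <= M -> ub_error (sqrt lam) B M <= / 2 ->
  UB beta lam - alpha_tilde beta lam <=
  2 * ((exp (erlang_error (sqrt lam) B M) - 1) * (1 + B * (M * exp (B * M)))
       + (M + 1) * exp (- M) + ub_error (sqrt lam) B M).
Proof.
  intros Hl Hb Hs HM Herr.
  pose proof (mills_int_le beta M B ltac:(lra) Hb) as HGle.
  pose proof (mills_int_ge0 beta M ltac:(lra)) as HG0.
  set (A := 1 + beta * mills_int beta M).
  assert (HA : 1 <= A <= 1 + B * (M * exp (B * M)))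
    by (unfold A; split; [nra | apply Rplus_le_compat_l, Rmult_le_compat; lra]).
  set (eta := erlang_error (sqrt lam) B M).
  assert (Heta : 0 <= eta) by (apply erlang_error_nonneg; lra).
  pose proof (ub_error_nonneg (sqrt lam) B M ltac:(lra) ltac:(lra) ltac:(lra)).
  assert (Hee : 1 <= exp eta) by (rewrite <- exp_0; apply exp_le_mono; lra).
  set (tau := (M + 1) * exp (- M)).
  assert (Htau : 0 <= tau) by (apply Rmult_le_pos; [lra | left; apply exp_pos]).
  set (P := exp eta * A + tau).
  assert (HP1 : 1 <= P) by (unfold P; nra).
  pose proof (alpha_tilde_ge_inv lam beta P Hl (proj1 Hb)
                (lam_erlang_int_le lam beta B M Hl Hb Hs HM) HP1) as Halpha.
  destruct (UB_le_mills lam beta M ltac:(lra) (proj1 Hb) ltac:(lra)) as [_ HUB].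
  pose proof (UB_denominator_ge lam beta M B Hl Hb ltac:(lra) ltac:(lra)) as HY.
  set (Y := lam / servers lam beta + ub_gamma lam beta * mills_int (ub_a lam beta) M) in *.
  fold A in HY.
  assert (HPY : P - Y <= (exp eta - 1) * (1 + B * (M * exp (B * M))) + tau
                         + ub_error (sqrt lam) B M).
  { unfold P. assert ((exp eta - 1) * A <= (exp eta - 1) * (1 + B * (M * exp (B * M))))
      by (apply Rmult_le_compat_l; lra).
    lra. }
  assert (0 <= (exp eta - 1) * (1 + B * (M * exp (B * M)))) by (apply Rmult_le_pos; lra).
  apply (inv_sub_inv_le Y P) in HPY; lra.
Qed.

Lemma erlang_error_small B M e : 0 <= B -> 0 <= M -> 0 < e ->
  exists S, 0 < S /\ forall s, S <= s -> erlang_error s B M <= e.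
Proof.
  intros HB HM He. set (k := (1 + B) * M ^ 3 / 3).
  assert (Hk : 0 <= k)
    by (unfold k; apply Rmult_le_pos; [apply Rmult_le_pos; [lra | apply pow_le; lra] | lra]).
  exists (Rmax 1 (k / e)). split; [pose proof (Rmax_l 1 (k / e)); lra|].
  intros s Hs. pose proof (Rmax_l 1 (k / e)). pose proof (Rmax_r 1 (k / e)).
  unfold erlang_error. replace ((1 + B) * M ^ 3 / (3 * s)) with (k / s) by (unfold k; field; lra).
  apply div_le_of_div_le; lra.
Qed.

Lemma ub_error_small B M e : 0 <= B -> 0 <= M -> 0 < e ->
  exists S, 0 < S /\ forall s, S <= s -> ub_error s B M <= e.
Proof.
  intros HB HM He. set (Q := M * exp (B * M)).
  assert (HQ : 0 <= Q) by (apply Rmult_le_pos; [lra | left; apply exp_pos]).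
  assert (HBMQ : 0 <= B * M * Q) by (apply Rmult_le_pos; [apply Rmult_le_pos|]; lra).
  set (d := e / 3 / (B * M * Q + 1)).
  assert (Hd : 0 < d) by (apply Rdiv_lt_0_compat; lra).
  set (S := Rmax 1 (Rmax (B / (e / 3)) (Rmax (B ^ 2 * Q / (e / 3)) (B ^ 3 / d ^ 2)))).
  assert (HS : 1 <= S /\ B / (e / 3) <= S /\ B ^ 2 * Q / (e / 3) <= S /\ B ^ 3 / d ^ 2 <= S).
  { unfold S. repeat split; repeat (apply Rmax_l || apply Rmax_r ||
      (eapply Rle_trans; [|apply Rmax_r])). }
  exists S. split; [lra|]. intros s Hs.
  assert (H1 : B / s <= e / 3) by (apply div_le_of_div_le; lra).
  assert (H2 : B ^ 2 / s * Q <= e / 3).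
  { replace (B ^ 2 / s * Q) with (B ^ 2 * Q / s) by (field; lra).
    apply div_le_of_div_le; try lra. apply Rmult_le_pos; [apply pow_le|]; lra. }
  assert (Hsq : sqrt (B ^ 3 / s) <= d).
  { rewrite <- (sqrt_square d) by lra. apply sqrt_le_1_alt.
    replace (d * d) with (d ^ 2) by ring.
    apply div_le_of_div_le; [apply pow_lt; lra | apply pow_le; lra | lra | lra]. }
  assert (H3 : B * sqrt (B ^ 3 / s) * M * Q <= e / 3).
  { pose proof (sqrt_pos (B ^ 3 / s)).
    apply Rle_trans with (B * M * Q * d).
    - replace (B * sqrt (B ^ 3 / s) * M * Q) with (B * M * Q * sqrt (B ^ 3 / s)) by ring.
      apply Rmult_le_compat_l; lra.
    - unfold d. apply (Rmult_le_reg_r (B * M * Q + 1)); [lra|].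
      field_simplify; nra. }
  unfold ub_error. fold Q. nra.
Qed.

Lemma sqrt_ge_of_square_le S x : 0 <= S -> S * S <= x -> S <= sqrt x.
Proof. intros. rewrite <- (sqrt_square S) by lra. apply sqrt_le_1_alt. lra. Qed.

Lemma UB_sub_alpha_tilde_uniform eps : 0 < eps -> exists Lam, 1 <= Lam /\
  forall lam beta, Lam <= lam -> 0 <= beta -> UB beta lam - alpha_tilde beta lam <= eps.
Proof.
  intros He.
  set (B := 18 / eps ^ 2 + 1).
  assert (HB : 18 / eps ^ 2 <= B /\ 1 <= B)
    by (unfold B; pose proof (Rdiv_lt_0_compat 18 (eps ^ 2) ltac:(lra) (pow_lt _ 2 He)); lra).
  set (M := Rmax (4 * (B + 1)) (32 / eps)).
  assert (HM : 4 * (B + 1) <= M /\ 32 / eps <= M) by (split; [apply Rmax_l | apply Rmax_r]).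
  set (Amax := 1 + B * (M * exp (B * M))).
  assert (HA : 1 <= Amax).
  { unfold Amax. pose proof (Rmult_le_pos M (exp (B * M)) ltac:(lra) (Rlt_le _ _ (exp_pos _))).
    pose proof (Rmult_le_pos B (M * exp (B * M)) ltac:(lra) H). lra. }
  set (e1 := Rmin (/ 2) (eps / (16 * Amax))). set (e2 := Rmin (/ 2) (eps / 8)).
  assert (He1 : 0 < e1 <= / 2 /\ e1 <= eps / (16 * Amax)).
  { unfold e1. repeat split; [apply Rmin_glb_lt; [lra | apply Rdiv_lt_0_compat; lra]
                              | apply Rmin_l | apply Rmin_r]. }
  assert (He2 : 0 < e2 <= / 2 /\ e2 <= eps / 8).
  { unfold e2. repeat split; [apply Rmin_glb_lt; lra | apply Rmin_l | apply Rmin_r]. }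
  destruct (erlang_error_small B M e1 ltac:(lra) ltac:(lra) ltac:(lra)) as [S1 [HS1 H1]].
  destruct (ub_error_small B M e2 ltac:(lra) ltac:(lra) ltac:(lra)) as [S2 [HS2 H2]].
  set (S := Rmax (4 * (B + 1)) (Rmax S1 S2)).
  assert (HS : 4 * (B + 1) <= S /\ S1 <= S /\ S2 <= S).
  { unfold S. repeat split; repeat (apply Rmax_l || apply Rmax_r ||
      (eapply Rle_trans; [|apply Rmax_r])). }
  exists (S * S). split; [nra|]. intros lam beta Hlam Hb.
  assert (Hl : 1 <= lam) by nra.
  assert (Hs : S <= sqrt lam) by (apply sqrt_ge_of_square_le; lra).
  pose proof (alpha_tilde_range lam beta Hl Hb).
  destruct (Rle_lt_dec beta B) as [HbB | HbB].
  - pose proof (H1 (sqrt lam) ltac:(lra)) as Heta. pose proof (H2 (sqrt lam) ltac:(lra)) as Herr.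
    pose proof (UB_sub_alpha_tilde_le lam beta B M Hl (conj Hb HbB)
                  ltac:(lra) ltac:(lra) ltac:(lra))
      as Hgap.
    fold Amax in Hgap.
    assert (Htau : (M + 1) * exp (- M) <= eps / 8).
    { eapply Rle_trans; [apply linear_exp_tail_le; lra|].
      apply div_le_of_div_le; try lra.
      replace (4 / (eps / 8)) with (32 / eps) by (field; lra). lra. }
    assert (Heta0 : 0 <= erlang_error (sqrt lam) B M) by (apply erlang_error_nonneg; lra).
    pose proof (exp_sub1_le_twice _ Heta0 ltac:(lra)).
    assert ((exp (erlang_error (sqrt lam) B M) - 1) * Amax <= eps / 8).
    { apply Rle_trans with (2 * (eps / (16 * Amax)) * Amax); [|right; field; lra].
      apply Rmult_le_compat_r; lra. }
    lra.
  - pose proof (UB_large_beta lam beta eps Hl He ltac:(lra) ltac:(lra)). lra.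
Qed.

Lemma prod_to_unit_interval k (X : nat -> R) :
  (forall i, (i < k)%nat -> 0 <= X i <= 1) -> 0 <= prod_to k X <= 1.
Proof.
  induction k as [|k IH]; intros H; simpl; [lra|].
  pose proof (IH ltac:(intros; apply H; lia)). pose proof (H k ltac:(lia)). nra.
Qed.

Lemma prod_to_zero k (X : nat -> R) : (exists i, (i < k)%nat /\ X i = 0) -> prod_to k X = 0.
Proof.
  induction k as [|k IH]; intros [i [Hi Hx]]; [lia|]. simpl.
  destruct (Nat.eq_dec i k) as [->|Hne]; [rewrite Hx; ring|].
  rewrite IH; [ring | exists i; split; auto; lia].
Qed.

(* Products of factors in [0, 1] are 1-Lipschitz in each factor. *)
Lemma prod_to_sub_le k (X Y : nat -> R) e : 0 <= e ->
  (forall i, (i < k)%nat -> 0 <= X i <= 1 /\ 0 <= Y i <= 1 /\ X i - Y i <= e) ->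
  prod_to k X - prod_to k Y <= INR k * e.
Proof.
  intros He. induction k as [|k IH]; intros Hi; cbn [prod_to]; [simpl; lra|].
  pose proof (IH ltac:(intros; apply Hi; lia)) as Hk.
  pose proof (prod_to_unit_interval k X ltac:(intros; apply Hi; lia)).
  pose proof (prod_to_unit_interval k Y ltac:(intros; apply Hi; lia)).
  destruct (Hi k ltac:(lia)) as [Hx [Hy Hxy]].
  rewrite S_INR. pose proof (pos_INR k).
  replace (prod_to k X * X k - prod_to k Y * Y k)
    with ((prod_to k X - prod_to k Y) * Y k + prod_to k X * (X k - Y k)) by ring.
  assert ((prod_to k X - prod_to k Y) * Y k <= INR k * e)
    by (destruct (Rle_lt_dec 0 (prod_to k X - prod_to k Y)); nra).
  assert (prod_to k X * (X k - Y k) <= e) by (destruct (Rle_lt_dec 0 (X k - Y k)); nra).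
  lra.
Qed.

Lemma eventually_all_ge L (lam0 : nat -> R) T : (forall i, (i < L)%nat -> 0 < lam0 i) ->
  exists N, forall m, (N <= m)%nat -> forall i, (i < L)%nat -> T <= INR m * lam0 i.
Proof.
  induction L as [|L IH]; intros Hl; [exists 0%nat; intros; lia|].
  destruct IH as [N1 HN1]; [intros; apply Hl; lia|].
  destruct (INR_unbounded (T / lam0 L)) as [N2 HN2].
  exists (Nat.max N1 N2). intros m Hm i Hi.
  destruct (Nat.eq_dec i L) as [->|Hne]; [|apply HN1; lia].
  assert (INR N2 <= INR m) by (apply le_INR; lia).
  pose proof (Hl L ltac:(lia)).
  replace T with (T / lam0 L * lam0 L) by (field; lra).
  apply Rmult_le_compat_r; lra.
Qed.

Lemma gap_eq L c delta lam0 m beta :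
  g_m L c delta lam0 m beta - f_m L c delta lam0 m beta =
  delta * (prod_to L (fun i => 1 - alpha_tilde (beta i) (INR m * lam0 i)) -
           prod_to L (fun i => 1 - UB (beta i) (INR m * lam0 i))).
Proof. unfold g_m, f_m. ring. Qed.

Section GapSet.

Variables (L : nat) (c : nat -> R -> R) (delta : R) (lam0 : nat -> R) (m : nat).
Hypothesis Hdelta : 0 < delta.
Hypothesis Hrates : forall i, (i < L)%nat -> 1 <= INR m * lam0 i.

Lemma factors_unit_interval beta : (forall i, (i < L)%nat -> 0 <= beta i) ->
  forall i, (i < L)%nat ->
  0 <= 1 - alpha_tilde (beta i) (INR m * lam0 i) <= 1 /\
  0 <= 1 - UB (beta i) (INR m * lam0 i) <= 1.
Proof.
  intros Hb i Hi. pose proof (Hrates i Hi) as Hl.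
  pose proof (alpha_tilde_range _ _ Hl (Hb i Hi)).
  destruct (UB_le_mills (INR m * lam0 i) (beta i) 0 ltac:(lra) (Hb i Hi) ltac:(lra)) as [HU _].
  pose proof (UB_le_1 _ (beta i) Hl (Hb i Hi)). lra.
Qed.

(* At beta = 0 we have UB = 1, so the gap is a nonnegative element of the gap set. *)
Lemma gap_at_zero : (1 <= L)%nat ->
  gap_set L c delta lam0 m
    (g_m L c delta lam0 m (fun _ => 0) - f_m L c delta lam0 m (fun _ => 0)) /\
  0 <= g_m L c delta lam0 m (fun _ => 0) - f_m L c delta lam0 m (fun _ => 0).
Proof.
  intros HL. split; [exists (fun _ => 0); split; [intros; lra | reflexivity]|].
  rewrite gap_eq, (prod_to_zero L (fun i => 1 - UB 0 (INR m * lam0 i))).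
  - assert (0 <= prod_to L (fun i => 1 - alpha_tilde 0 (INR m * lam0 i))).
    { apply prod_to_unit_interval. intros i Hi.
      apply (factors_unit_interval (fun _ => 0)); auto. intros; lra. }
    nra.
  - exists 0%nat. split; [lia|]. rewrite UB_zero; [ring|]. pose proof (Hrates 0%nat HL). lra.
Qed.

Lemma gap_set_le_delta y : gap_set L c delta lam0 m y -> y <= delta.
Proof.
  intros [beta [Hb ->]]. rewrite gap_eq.
  pose proof (prod_to_unit_interval L (fun i => 1 - alpha_tilde (beta i) (INR m * lam0 i))
                (fun i Hi => proj1 (factors_unit_interval beta Hb i Hi))).
  pose proof (prod_to_unit_interval L (fun i => 1 - UB (beta i) (INR m * lam0 i))
                (fun i Hi => proj2 (factors_unit_interval beta Hb i Hi))).
  nra.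
Qed.

Lemma gap_set_le_uniform e : 0 <= e ->
  (forall i beta, (i < L)%nat -> 0 <= beta ->
     UB beta (INR m * lam0 i) - alpha_tilde beta (INR m * lam0 i) <= e) ->
  forall y, gap_set L c delta lam0 m y -> y <= delta * (INR L * e).
Proof.
  intros He Hclose y [beta [Hb ->]]. rewrite gap_eq. apply Rmult_le_compat_l; [lra|].
  apply prod_to_sub_le; auto. intros i Hi.
  destruct (factors_unit_interval beta Hb i Hi).
  pose proof (Hclose i (beta i) Hi (Hb i Hi)). lra.
Qed.

Definition gap_sup : R := epsilon (inhabits 0) (is_lub (gap_set L c delta lam0 m)).

Lemma gap_sup_spec : (1 <= L)%nat ->
  is_lub (gap_set L c delta lam0 m) gap_sup /\ 0 <= gap_sup.
Proof.
  intros HL. destruct (gap_at_zero HL) as [Hin Hpos].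
  assert (Hlub : is_lub (gap_set L c delta lam0 m) gap_sup).
  { unfold gap_sup. apply epsilon_spec.
    destruct (completeness (gap_set L c delta lam0 m)) as [x Hx];
      [exists delta; exact gap_set_le_delta | eexists; exact Hin |].
    exists x. exact Hx. }
  split; [exact Hlub|]. eapply Rle_trans; [exact Hpos | apply (proj1 Hlub), Hin].
Qed.

End GapSet.

Theorem lemma7 (L : nat) (delta : R) (lam0 : nat -> R) (c : nat -> R -> R)
  (HL : (1 <= L)%nat)
  (Hdelta : 0 < delta)
  (Hlam0 : forall i, (i < L)%nat -> 0 < lam0 i)
  (Hcont : forall i, (i < L)%nat -> forall x, 0 <= x ->
     forall eps, 0 < eps -> exists d, 0 < d /\
       forall y, 0 <= y -> Rabs (y - x) < d -> Rabs (c i y - c i x) < eps)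
  (Hincr : forall i, (i < L)%nat -> forall x y, 0 <= x -> x < y -> c i x < c i y) :
  exists s : nat -> R,
    (exists N : nat, forall m, (N <= m)%nat -> is_lub (gap_set L c delta lam0 m) (s m))
    /\ Un_cv s 0.
Proof.
  exists (gap_sup L c delta lam0). split.
  - destruct (eventually_all_ge L lam0 1 Hlam0) as [N HN].
    exists N. intros m Hm. apply (gap_sup_spec L c delta lam0 m Hdelta (HN m Hm) HL).
  - intros eps Heps.
    assert (HLpos : 1 <= INR L) by (apply (le_INR 1); exact HL).
    set (e := eps / (2 * delta * INR L)).
    assert (He : 0 < e) by (apply Rdiv_lt_0_compat; nra).
    destruct (UB_sub_alpha_tilde_uniform e He) as [Lam [HLam1 HLam]].
    destruct (eventually_all_ge L lam0 Lam Hlam0) as [N HN].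
    exists N. intros m Hm.
    assert (Hrates : forall i, (i < L)%nat -> 1 <= INR m * lam0 i)
      by (intros i Hi; pose proof (HN m Hm i Hi); lra).
    destruct (gap_sup_spec L c delta lam0 m Hdelta Hrates HL) as [[_ Hleast] Hpos].
    assert (Hsmall : gap_sup L c delta lam0 m <= delta * (INR L * e)).
    { apply Hleast. intros y Hy.
      refine (gap_set_le_uniform L c delta lam0 m Hdelta Hrates e _ _ y Hy); [lra|].
      intros i beta Hi Hb. apply HLam; auto. }
    replace (delta * (INR L * e)) with (eps / 2) in Hsmall by (unfold e; field; lra).
    unfold R_dist. rewrite Rminus_0_r, Rabs_right by lra. lra.
Qed.
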